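(* Let $K\subset GL(4,\mathbb C)$ be the group generated by $\rho_1=\begin{pmatrix}1&0&0&0\\1&1&0&0\\0&0&1&0\\0&0&1&1\end{pmatrix}$, $\rho_2=\begin{pmatrix}1&0&0&0\\0&1&0&0\\1&0&1&0\\0&1&0&1\end{pmatrix}$, $\rho_3=\begin{pmatrix}1&-2&-2&0\\0&1&0&0\\0&0&1&0\\0&0&0&1\end{pmatrix}$, and let $$\tilde{\mathsf H}_0=\begin{pmatrix}0&2i\sqrt2&2i\sqrt2&0\\-2i\sqrt2&0&0&0\\-2i\sqrt2&0&0&0\\0&0&0&0\end{pmatrix},\qquad \mathsf R_0=\frac1{\sqrt2}\begin{pmatrix}i&0&-i&0\\0&-\frac{1+i}{\sqrt2}&0&-\frac{1-i}{\sqrt2}\\0&\frac{1-i}{\sqrt2}&0&\frac{1+i}{\sqrt2}\\1&0&1&0\end{pmatrix},\qquad \mathsf G=\begin{pmatrix}0&-2&0&2\\2&0&-2&0\\0&2&0&-2\\-2&0&2&0\end{pmatrix}.$$ Then $\mathsf R_0$ is unitary (${}^t\overline{\mathsf R_0}\mathsf R_0=\mathrm{Id}_4$), $\mathsf R_0^{-1}\tilde{\mathsf H}_0\mathsf R_0=\sqrt{-1}\,\mathsf G$, and $\sqrt{-1}\,\mathsf G$ spans the (one-dimensional) real vector space of Hermitian quadratic invariants of the conjugated group $\langle \mathsf R_0^{-1}\rho_1\mathsf R_0,\ \mathsf R_0^{-1}\rho_2\mathsf R_0,\ \mathsf R_0^{-1}\rho_3\mathsf R_0\rangle$, i.e. of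 the Hermitian matrices $Q$ with ${}^t\overline g Q g=Q$ for all $g$ in that group.
   Context: The matrices $\rho_1,\rho_2,\rho_3$ are the images of the loops around $x=0$, $y=0$ and the parabola $16(x-y)^2-8(x+y)+1=0$ under the monodromy representation (w.r.t. a twisted-cycle basis, obtained from the generalised Picard–Lefschetz theorem) of the Horn system $\big(\theta_x^2-x(2\theta_x+2\theta_y+1)(2\theta_x+2\theta_y+2)\big)f=0$, $\big(\theta_y^2-y(2\theta_x+2\theta_y+1)(2\theta_x+2\theta_y+2)\big)f=0$ ($\theta_x=x\partial_x$, $\theta_y=y\partial_y$). $\mathsf G$ is the Gram matrix, with respect to the Euler form, of the derived restrictions to a generic bi-degree $(2,2)$ curve in $\mathbb P^1\times\mathbb P^1$ of the right dual exceptional collection of $(\mathcal O,\mathcal O(1,0),\mathcal O(1,1),\mathcal O(2,1))$. *)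

(* complex numbers are modelled by algC (algebraic complex
   numbers); all entries involved are algebraic. *)
From HB Require Import structures.
From mathcomp Require Import all_boot all_order all_algebra all_field.
From mathcomp Require Import algC.
Set Implicit Arguments. Unset Strict Implicit. Unset Printing Implicit Defensive.
Import Order.TTheory GRing.Theory Num.Theory.
Local Open Scope ring_scope.

Definition mx4 (rows : seq (seq algC)) : 'M[algC]_4 :=
  \matrix_(i < 4, j < 4) nth 0 (nth [::] rows i) j.

Definition adjC (A : 'M[algC]_4) : 'M[algC]_4 := (map_mx (fun x : algC => x^*) A)^T.

Definition hermitian_mx4 (Q : 'M[algC]_4) : Prop := adjC Q = Q.

Inductive in_gen_group (S : seq 'M[algC]_4) : 'M[algC]_4 -> Prop :=
| gen_gen g : g \in S -> in_gen_group S g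
| gen_one : in_gen_group S 1%:M
| gen_mul g h : in_gen_group S g -> in_gen_group S h -> in_gen_group S (g *m h)
| gen_inv g : in_gen_group S g -> in_gen_group S (invmx g).

Definition sqrt2 : algC := sqrtC 2.

Definition rho1 : 'M[algC]_4 :=
  mx4 [:: [:: 1; 0; 0; 0]; [:: 1; 1; 0; 0]; [:: 0; 0; 1; 0]; [:: 0; 0; 1; 1]].
Definition rho2 : 'M[algC]_4 :=
  mx4 [:: [:: 1; 0; 0; 0]; [:: 0; 1; 0; 0]; [:: 1; 0; 1; 0]; [:: 0; 1; 0; 1]].
Definition rho3 : 'M[algC]_4 :=
  mx4 [:: [:: 1; -2; -2; 0]; [:: 0; 1; 0; 0]; [:: 0; 0; 1; 0]; [:: 0; 0; 0; 1]].

Definition H0t : 'M[algC]_4 :=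
  mx4 [:: [:: 0; 2 * 'i * sqrt2; 2 * 'i * sqrt2; 0];
          [:: - (2 * 'i * sqrt2); 0; 0; 0];
          [:: - (2 * 'i * sqrt2); 0; 0; 0];
          [:: 0; 0; 0; 0]].

Definition R0 : 'M[algC]_4 :=
  sqrt2^-1 *: mx4 [:: [:: 'i; 0; - 'i; 0];
                      [:: 0; - ((1 + 'i) / sqrt2); 0; - ((1 - 'i) / sqrt2)];
                      [:: 0; (1 - 'i) / sqrt2; 0; (1 + 'i) / sqrt2];
                      [:: 1; 0; 1; 0]].

Definition Gmx : 'M[algC]_4 :=
  mx4 [:: [:: 0; -2; 0; 2]; [:: 2; 0; -2; 0]; [:: 0; 2; 0; -2]; [:: -2; 0; 2; 0]].

Definition conjR0 (g : 'M[algC]_4) : 'M[algC]_4 := invmx R0 *m g *m R0.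

(** R0 is unitary, so conjugating the group by R0 transports its invariant
    Hermitian forms: Q is invariant for R0^-1 K R0 iff R0 Q R0^* is invariant
    for K.  Invariance under the three generators of K is a linear system on
    the sixteen entries, whose solutions are the multiples of one integer
    matrix J, and H0t is a multiple of J.  Back in the new coordinates the
    invariant forms are therefore the complex multiples of i G, and such a
    multiple is Hermitian exactly when the coefficient is real, because i G is
    a nonzero Hermitian matrix. *)

From HB Require Import structures.
From mathcomp Require Import all_boot all_order all_algebra all_field.
From mathcomp Require Import algC.
From mathcomp Require Import ring.

Set Implicit Arguments.
Unset Strict Implicit.
Unset Printing Implicit Defensive.

Import Order.TTheory GRing.Theory Num.Theory.
Local Open Scope ring_scope.

Notation o0 := (@Ordinal 4 0 isT).
Notation o1 := (@Ordinal 4 1 isT).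
Notation o2 := (@Ordinal 4 2 isT).
Notation o3 := (@Ordinal 4 3 isT).

Lemma ord4_ind (P : 'I_4 -> Prop) : P o0 -> P o1 -> P o2 -> P o3 -> forall i, P i.
Proof. by move=> ? ? ? ? [[|[|[|[|k]]]] lt_i4] //; rewrite (bool_irrelevance lt_i4 isT). Qed.

Lemma mulmx4E (A B : 'M[algC]_4) i j :
  (A *m B) i j = A i o0 * B o0 j + A i o1 * B o1 j + A i o2 * B o2 j + A i o3 * B o3 j.
Proof.
rewrite mxE !big_ord_recl big_ord0 addr0 !addrA.
by congr (_ + _ + _ + _); congr (A i _ * B _ j); apply: val_inj.
Qed.

Lemma mx4E rows i j : mx4 rows i j = nth 0 (nth [::] rows i) j.
Proof. by rewrite mxE. Qed.

Lemma adjCE (A : 'M[algC]_4) i j : adjC A i j = (A j i)^*.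
Proof. by rewrite !mxE. Qed.

Section ConjArith.

Variable C : numClosedFieldType.
Implicit Types x y : C.

Lemma conjCM x y : (x * y)^* = x^* * y^*. Proof. exact: rmorphM. Qed.
Lemma conjCD x y : (x + y)^* = x^* + y^*. Proof. exact: rmorphD. Qed.
Lemma conjCB x y : (x - y)^* = x^* - y^*. Proof. exact: rmorphB. Qed.
Lemma conjCN x : (- x)^* = - x^*. Proof. exact: rmorphN. Qed.
Lemma conjCV x : (x^-1)^* = x^*^-1. Proof. exact: fmorphV. Qed.

End ConjArith.

Ltac entrywise := apply/matrixP; apply: ord4_ind; apply: ord4_ind.

Ltac entry_simpl :=
  rewrite ?adjCE ?mulmx4E ?mxE ?mx4E; cbn [nth nat_of_ord];
  rewrite ?(conjCM, conjCD, conjCB, conjCN, conjCV, conjC0, conjC1, conjC_nat, conjCi).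

Lemma eq_of_scaled_diff (R : idomainType) (k a b x y : R) :
  k != 0 -> a = b -> a - b = k * (x - y) -> x = y.
Proof.
move=> k_neq0 ->; rewrite subrr => /esym/eqP.
by rewrite mulf_eq0 (negbTE k_neq0) subr_eq0 => /eqP.
Qed.

Lemma mulmx_scale_mid (R : comNzRingType) m n p q (A : 'M[R]_(m, n)) a
    (B : 'M[R]_(n, p)) (C : 'M[R]_(p, q)) :
  A *m (a *: B) *m C = a *: (A *m B *m C).
Proof. by rewrite -scalemxAr -scalemxAl. Qed.

Lemma adjCM (A B : 'M[algC]_4) : adjC (A *m B) = adjC B *m adjC A.
Proof. by rewrite /adjC -trmx_mul map_mxM. Qed.

Lemma adjCK (A : 'M[algC]_4) : adjC (adjC A) = A.
Proof. by apply/matrixP=> i j; rewrite !mxE conjCK. Qed.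

Lemma adjCZ a (A : 'M[algC]_4) : adjC (a *: A) = a^* *: adjC A.
Proof. by apply/matrixP=> i j; rewrite !mxE rmorphM. Qed.

Lemma adjC1 : adjC 1%:M = 1%:M.
Proof. by apply/matrixP=> i j; rewrite !mxE rmorph_nat eq_sym. Qed.

Lemma hermitianZ_real (H : 'M[algC]_4) a :
  hermitian_mx4 H -> H != 0 -> hermitian_mx4 (a *: H) <-> a \is Num.real.
Proof.
rewrite /hermitian_mx4 adjCZ => -> H_neq0; split => [|/CrealP -> //].
move/eqP; rewrite -subr_eq0 -scalerBl scalemx_eq0 (negbTE H_neq0) orbF subr_eq0.
by move/eqP/CrealP.
Qed.

Definition unitary_mx4 (U : 'M[algC]_4) : Prop := adjC U *m U = 1%:M.

Section Unitary.

Variable U : 'M[algC]_4.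
Hypothesis U_unitary : unitary_mx4 U.

Lemma unitary_mulmx_adjC : U *m adjC U = 1%:M.
Proof. exact: mulmx1C U_unitary. Qed.

Lemma unitary_invmx : invmx U = adjC U.
Proof.
have [U_unit _] := mulmx1_unit unitary_mulmx_adjC.
by rewrite -[invmx U]mulmx1 -unitary_mulmx_adjC mulmxA mulVmx // mul1mx.
Qed.

Lemma unitary_conjK (A : 'M[algC]_4) : adjC U *m (U *m A *m adjC U) *m U = A.
Proof. by rewrite !mulmxA U_unitary mul1mx -mulmxA U_unitary mulmx1. Qed.

Lemma unitary_conjVK (A : 'M[algC]_4) : U *m (adjC U *m A *m U) *m adjC U = A.
Proof.
by rewrite !mulmxA unitary_mulmx_adjC mul1mx -mulmxA unitary_mulmx_adjC mulmx1.
Qed.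

Lemma unitary_conjI (A B : 'M[algC]_4) :
  adjC U *m A *m U = adjC U *m B *m U <-> A = B.
Proof. by split=> [E|-> //]; rewrite -(unitary_conjVK A) E unitary_conjVK. Qed.

Lemma unitary_conj_eq (A B : 'M[algC]_4) : U *m A *m adjC U = B <-> A = adjC U *m B *m U.
Proof. by split=> [<-|->]; rewrite ?unitary_conjK ?unitary_conjVK. Qed.

End Unitary.

Definition preserves_form (g Q : 'M[algC]_4) : Prop := adjC g *m Q *m g = Q.

Lemma preserves_formZ g Q a : preserves_form g Q -> preserves_form g (a *: Q).
Proof. by rewrite /preserves_form mulmx_scale_mid => ->. Qed.

Lemma gen_group_preserves_form S Q :
  (forall g, in_gen_group S g -> preserves_form g Q) <->
  {in S, forall g, preserves_form g Q}.
Proof.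
split=> [inv g /gen_gen/inv // | inv g]; rewrite /preserves_form.
elim=> {g} [g /inv //| | g h _ IHg _ IHh | g _ IH].
- by rewrite adjC1 mul1mx mulmx1.
- by rewrite adjCM !mulmxA -[adjC h *m adjC g *m Q]mulmxA -[adjC h *m _ *m g]mulmxA IHg IHh.
- have [g_unit | g_nonunit] := boolP (g \in unitmx); last by rewrite invmx_out.
  rewrite -[X in _ *m X *m _]IH !mulmxA -adjCM mulmxV // adjC1 mul1mx.
  by rewrite -mulmxA mulmxV // mulmx1.
Qed.

Lemma preserves_form_conj U g Q : unitary_mx4 U ->
  preserves_form (invmx U *m g *m U) Q <-> preserves_form g (U *m Q *m adjC U).
Proof.
move=> U_unitary; rewrite /preserves_form (unitary_invmx U_unitary) !adjCM adjCK.
set P := U *m Q *m adjC U.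
have -> : adjC U *m (adjC g *m U) *m Q *m (adjC U *m g *m U)
          = adjC U *m (adjC g *m P *m g) *m U by rewrite /P !mulmxA.
by rewrite -{1}(unitary_conjK U_unitary Q) -/P unitary_conjI.
Qed.

Lemma sqrt2_sq : sqrt2 ^+ 2 = 2.
Proof. by rewrite sqrtCK. Qed.

Lemma sqrt2_neq0 : sqrt2 != 0.
Proof. by rewrite sqrtC_eq0 pnatr_eq0. Qed.

Lemma conj_sqrt2 : sqrt2^* = sqrt2.
Proof. by apply/CrealP; rewrite realE sqrtC_ge0 ler0n. Qed.

Lemma H0t_scale_neq0 : - (2 * 'i * sqrt2) != 0.
Proof. by rewrite oppr_eq0 !mulf_neq0 ?sqrt2_neq0 ?neq0Ci ?pnatr_eq0. Qed.

Lemma R0_unitary : unitary_mx4 R0.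
Proof.
rewrite /unitary_mx4; entrywise; rewrite /R0; entry_simpl; rewrite ?conj_sqrt2 /=.
all: field: sqrt2_sq (@sqrCi algC).
all: exact: sqrt2_neq0.
Qed.

Definition Jmx : 'M[algC]_4 :=
  mx4 [:: [:: 0; -1; -1; 0]; [:: 1; 0; 0; 0]; [:: 1; 0; 0; 0]; [:: 0; 0; 0; 0]].

Lemma H0t_Jmx : H0t = - (2 * 'i * sqrt2) *: Jmx.
Proof. by entrywise; rewrite /H0t /Jmx; entry_simpl; ring. Qed.

Lemma R0_conj_Jmx : adjC R0 *m Jmx *m R0 = (- (2 * 'i * sqrt2))^-1 *: ('i *: Gmx).
Proof.
entrywise; rewrite /R0 /Jmx /Gmx; entry_simpl; rewrite ?conj_sqrt2.
all: field: sqrt2_sq (@sqrCi algC).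
all: by rewrite ?mulf_neq0 ?oppr_eq0 ?sqrt2_neq0 ?neq0Ci ?pnatr_eq0.
Qed.

Lemma R0_conj_H0t : invmx R0 *m H0t *m R0 = 'i *: Gmx.
Proof.
rewrite (unitary_invmx R0_unitary) H0t_Jmx mulmx_scale_mid R0_conj_Jmx.
by rewrite scalerA mulfV ?scale1r // H0t_scale_neq0.
Qed.

(* Entry (i, j) of [adjC rho *m P *m rho = P] reads [k * (x - y) = 0] for two
   entries x, y of P, once the entries already determined are substituted. *)
Ltac entry_from E k := apply: (eq_of_scaled_diff k E); entry_simpl.

Lemma rho_invariant_forms P :
  [/\ preserves_form rho1 P, preserves_form rho2 P & preserves_form rho3 P] <->
  exists a, P = a *: Jmx.
Proof.
split=> [| [a ->]]; last first.
  by split; apply: preserves_formZ; entrywise; rewrite /Jmx /rho1 /rho2 /rho3; entry_simpl; ring.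
rewrite /preserves_form /rho1 /rho2 /rho3 => -[/matrixP E1 /matrixP E2 /matrixP E3].
have n1 : (1 : algC) != 0 := oner_neq0 _.
have n2 : (-2 : algC) != 0 by rewrite oppr_eq0 pnatr_eq0.
have h11 : P o1 o1 = 0 by entry_from (E1 o0 o1) n1; ring.
have h13 : P o1 o3 = 0 by entry_from (E1 o0 o3) n1; ring.
have h31 : P o3 o1 = 0 by entry_from (E1 o2 o1) n1; ring.
have h33 : P o3 o3 = 0 by entry_from (E1 o2 o3) n1; ring.
have h22 : P o2 o2 = 0 by entry_from (E2 o0 o2) n1; ring.
have h23 : P o2 o3 = 0 by entry_from (E2 o0 o3) n1; ring.
have h32 : P o3 o2 = 0 by entry_from (E2 o1 o2) n1; ring.
have h00 : P o0 o0 = 0 by entry_from (E3 o0 o1) n2; ring.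
have h03 : P o0 o3 = 0 by entry_from (E3 o1 o3) n2; ring.
have h30 : P o3 o0 = 0 by entry_from (E3 o3 o1) n2; ring.
have h12 : P o1 o2 = 0 by entry_from (E1 o0 o2) n1; rewrite h03 h13; ring.
have h21 : P o2 o1 = 0 by entry_from (E1 o2 o0) n1; rewrite h30 h31; ring.
have h01 : P o0 o1 = - P o2 o0 by entry_from (E3 o2 o1) n2; rewrite h00; ring.
have h02 : P o0 o2 = - P o2 o0 by entry_from (E3 o2 o2) n2; rewrite h00; ring.
have h10 : P o1 o0 = P o2 o0 by entry_from (E3 o1 o2) n2; rewrite h00 h02; ring.
exists (P o2 o0); entrywise; rewrite /Jmx; entry_simpl;
  rewrite ?(h00, h01, h02, h03, h10, h11, h12, h13, h21, h22, h23, h30, h31, h32, h33); ring.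
Qed.

Lemma hermitian_iG : hermitian_mx4 ('i *: Gmx).
Proof. by rewrite /hermitian_mx4; entrywise; rewrite /Gmx; entry_simpl; ring. Qed.

Lemma iG_neq0 : 'i *: Gmx != 0.
Proof.
apply/negP => /eqP/matrixP/(_ o0 o1)/eqP; rewrite /Gmx; entry_simpl.
by rewrite mulf_eq0 oppr_eq0 pnatr_eq0 orbF (negbTE (neq0Ci _)).
Qed.

Lemma conjR0_invariant_forms Q :
  {in [:: conjR0 rho1; conjR0 rho2; conjR0 rho3], forall g, preserves_form g Q} <->
  exists a, Q = a *: ('i *: Gmx).
Proof.
have conj_rho rho : preserves_form (conjR0 rho) Q <-> preserves_form rho (R0 *m Q *m adjC R0).
  exact: preserves_form_conj R0_unitary.
transitivity (exists a, R0 *m Q *m adjC R0 = a *: Jmx).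
  rewrite -rho_invariant_forms; split=> [inv | [/conj_rho ? /conj_rho ? /conj_rho ?] g].
    by split; apply/conj_rho/inv; rewrite !inE eqxx ?orbT.
  by rewrite !inE => /or3P [] /eqP ->.
split=> -[a EQ].
  exists (a / - (2 * 'i * sqrt2)); move/(unitary_conj_eq R0_unitary): EQ => ->.
  by rewrite mulmx_scale_mid R0_conj_Jmx; exact: scalerA.
exists (a * - (2 * 'i * sqrt2)); apply/(unitary_conj_eq R0_unitary).
by rewrite EQ mulmx_scale_mid R0_conj_Jmx [RHS]scalerA mulfK ?H0t_scale_neq0.
Qed.

Theorem proposition4p2 :
  adjC R0 *m R0 = 1%:M /\
  invmx R0 *m H0t *m R0 = 'i *: Gmx /\
  (forall Q : 'M[algC]_4,
     (hermitian_mx4 Q /\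
      (forall g, in_gen_group [:: conjR0 rho1; conjR0 rho2; conjR0 rho3] g ->
                 adjC g *m Q *m g = Q))
     <-> exists2 r : algC, r \is Num.real & Q = r *: ('i *: Gmx)).
Proof.
split; first exact: R0_unitary.
split; first exact: R0_conj_H0t.
move=> Q; have := gen_group_preserves_form [:: conjR0 rho1; conjR0 rho2; conjR0 rho3] Q.
rewrite conjR0_invariant_forms /preserves_form => ->.
have herm_iGZ a := hermitianZ_real a hermitian_iG iG_neq0.
split=> [[herm [a EQ]] | [r r_real EQ]].
  by exists a; rewrite // -herm_iGZ -EQ.
by split; [rewrite EQ herm_iGZ | exists r].
Qed.
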